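(* Let $u(n)$ be a sequence of nonnegative integers with $\lim_{n\to\infty}u(n)=\infty$, and for each $n$ let $A:\widehat{\mathbb{Z}}^{n+u(n)}\to\widehat{\mathbb{Z}}^n$ be a random $n\times(n+u(n))$ matrix whose entries are independent and each distributed according to the Haar probability measure on $\widehat{\mathbb{Z}}$. Then \[\lim_{n\to\infty}\mathbb{P}(A\text{ is surjective})=1.\]
   Context: $\widehat{\mathbb{Z}}=\prod_{p\text{ prime}}\mathbb{Z}_p$ is the profinite completion of $\mathbb{Z}$, with its Haar probability measure (the product of the Haar probability measures on the $p$-adic integers $\mathbb{Z}_p$). *)

From HB Require Import structures.
From mathcomp Require Import all_boot all_order all_algebra.
From mathcomp Require Import all_classical all_reals all_analysis.
Set Implicit Arguments. Unset Strict Implicit. Unset Printing Implicit Defensive.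
Import Order.TTheory GRing.Theory Num.Theory.
Local Open Scope classical_set_scope.
Local Open Scope ring_scope.

(* The profinite completion  Zhat = lim_{N >= 1} Z/NZ  (isomorphic to prod_p Z_p):
   an element is a compatible family (x_k)_k with x_k in Z/(k+1)Z, represented
   by its canonical residue in [0, k], such that x_k = x_l mod (k+1) whenever
   (k+1) | (l+1). *)
Record Zhat := MkZhat {
  zc : nat -> nat;
  zc_lt : forall k, (zc k < k.+1)%N;
  zc_compat : forall k l, (k.+1 %| l.+1)%N -> zc k = (zc l %% k.+1)%N }.

Lemma zhat0_lt k : (0 < k.+1)%N. Proof. by []. Qed.
Lemma zhat0_compat k l : (k.+1 %| l.+1)%N -> (0 = 0 %% k.+1)%N.
Proof. by rewrite mod0n. Qed.
Definition zhat0 : Zhat := MkZhat zhat0_lt zhat0_compat.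

HB.instance Definition _ := gen_eqMixin Zhat.
HB.instance Definition _ := gen_choiceMixin Zhat.
HB.instance Definition _ := isPointed.Build Zhat zhat0.

Definition ZMat (n m : nat) := 'I_n -> 'I_m -> Zhat.
HB.instance Definition _ n m := gen_eqMixin (ZMat n m).
HB.instance Definition _ n m := gen_choiceMixin (ZMat n m).
HB.instance Definition _ n m := isPointed.Build (ZMat n m) (fun _ _ => zhat0).

(* Cylinder sets: prescribe all entries modulo k+1. They generate the Borel
   sigma-algebra of the compact group Zhat^{n x m}. *)
Definition zcyl (n m : nat) : set (set (ZMat n m)) :=
  [set S | exists (k : nat) (B : 'I_n -> 'I_m -> nat),
           S = [set A | forall i j, zc (A i j) k = B i j]].

Definition ZMatSp (n m : nat) := g_sigma_algebraType (@zcyl n m).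

Definition entries_haar (R : realType) (n m : nat)
    (P : probability (ZMatSp n m) R) : Prop :=
  forall (i : 'I_n) (j : 'I_m) (k b : nat), (b < k.+1)%N ->
    P [set A : ZMatSp n m | zc (A i j) k = b] = ((k.+1)%:R^-1 : R)%:E.

Definition entries_indep (R : realType) (n m : nat)
    (P : probability (ZMatSp n m) R) : Prop :=
  forall (k : nat) (B : 'I_n -> 'I_m -> nat),
    P [set A : ZMatSp n m | forall i j, zc (A i j) k = B i j] =
    (\prod_(i < n) \prod_(j < m) fine (P [set A : ZMatSp n m | zc (A i j) k = B i j]))%:E.

(* Level-k component of the i-th coordinate of A x in Zhat (ring operations of
   the inverse limit are computed componentwise). *)
Definition zmatvec_level (n m : nat) (A : ZMat n m) (x : 'I_m -> Zhat)
    (i : 'I_n) (k : nat) : nat :=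
  ((\sum_(j < m) zc (A i j) k * zc (x j) k) %% k.+1)%N.

Definition zsurjective (n m : nat) (A : ZMat n m) : Prop :=
  forall y : 'I_n -> Zhat, exists x : 'I_m -> Zhat,
    forall (i : 'I_n) (k : nat), zmatvec_level A x i k = zc (y i) k.

(* A matrix A over Zhat is surjective iff it is surjective modulo every N:
   solutions modulo j`! can be refined coherently, the factorials being cofinal
   for divisibility.  A solution modulo M lifts to one modulo M b as soon as the
   system is solvable modulo b, so it suffices that A mod p has full row rank
   for every prime p.  The residue A mod p is uniformly distributed, and a
   singular n x (n + u) matrix over F_p is killed by a nonzero row vector, so a
   union bound gives P(A mod p singular) <= p^n p^-(n+u) = p^-u.  Hence
   P(A not surjective) <= sum_(k >= 2) k^-u <= 4 / 2^u, which tends to 0. *)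

From HB Require Import structures.
From mathcomp Require Import all_boot all_order all_algebra.
From mathcomp Require Import all_classical all_reals all_analysis.
From mathcomp Require Import ring lra zify.
Import Order.TTheory GRing.Theory Num.Theory numFieldNormedType.Exports.
Set Implicit Arguments. Unset Strict Implicit. Unset Printing Implicit Defensive.

Definition solvable_mod n m (a : 'I_n -> 'I_m -> nat) (N : nat) :=
  forall y : 'I_n -> nat, exists x : 'I_m -> nat,
    forall i, (\sum_j a i j * x j = y i %[mod N])%N.

Lemma eq_modn_sum I (r : seq I) (f g : I -> nat) d :
  (forall i, f i = g i %[mod d])%N -> (\sum_(i <- r) f i = \sum_(i <- r) g i %[mod d])%N.
Proof.
move=> fg; rewrite -(modn_summ r predT f) -(modn_summ r predT g).
by congr (_ %% _); apply: eq_bigr => i _; apply: fg.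
Qed.

Lemma solvable_mod_congr n m (a a' : 'I_n -> 'I_m -> nat) N :
  (forall i j, a i j = a' i j %[mod N])%N -> solvable_mod a N -> solvable_mod a' N.
Proof.
move=> aa' Sa y; have [x Hx] := Sa y; exists x => i.
by rewrite -Hx; apply: eq_modn_sum => j; rewrite -modnMml -aa' modnMml.
Qed.

(* Hensel-type lifting: correct a solution mod M by M z, with z solving the
   rescaled error mod b. *)
Lemma solvable_mod_lift n m (a : 'I_n -> 'I_m -> nat) M b y x :
  (0 < M)%N -> (0 < b)%N -> solvable_mod a b ->
  (forall i, \sum_j a i j * x j = y i %[mod M])%N ->
  exists x', (forall i, \sum_j a i j * x' j = y i %[mod M * b])%N /\
             (forall j, x' j = x j %[mod M])%N.
Proof.
move=> M0 b0 Sb Hx.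
pose s i := (\sum_j a i j * x j)%N.
pose r i := (y i + (M * b).-1 * s i)%N.
have rE i : (r i + s i = y i + M * b * s i)%N.
  by rewrite /r -addnA -mulSnr prednK ?muln_gt0 ?M0.
have M_dvd_r i : (M %| r i)%N.
  have : (r i + s i = 0 + s i %[mod M])%N.
    by rewrite rE add0n -mulnA addnC mulnC modnMDl Hx.
  by move/eqP; rewrite eqn_modDr mod0n.
have [z Hz] := Sb (fun i => r i %/ M)%N.
exists (fun j => x j + M * z j)%N; split; last first.
  by move=> j; rewrite addnC mulnC modnMDl.
move=> i; have -> : (\sum_j a i j * (x j + M * z j) = s i + M * \sum_j a i j * z j)%N.
  by rewrite /s big_distrr -big_split; apply: eq_bigr => j _; rewrite mulnDr mulnCA.
rewrite -modnDmr -muln_modr Hz muln_modr mulnC divnK // modnDmr addnC rE.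
by rewrite -modnDmr mulnC modnMl addn0.
Qed.

Lemma solvable_mod_mul n m (a : 'I_n -> 'I_m -> nat) M b :
  (0 < M)%N -> (0 < b)%N -> solvable_mod a M -> solvable_mod a b -> solvable_mod a (M * b).
Proof.
move=> M0 b0 SM Sb y; have [x Hx] := SM y.
by have [x' [Hx' _]] := solvable_mod_lift M0 b0 Sb Hx; exists x'.
Qed.

Lemma solvable_mod1 n m (a : 'I_n -> 'I_m -> nat) : solvable_mod a 1.
Proof. by move=> y; exists (fun=> 0%N) => i; rewrite !modn1. Qed.

(* [zc _ k] is the residue modulo k + 1, hence the shift; only used for 0 < N. *)
Definition zmx_mod n m (A : ZMat n m) N : 'I_n -> 'I_m -> nat :=
  fun i j => zc (A i j) N.-1.

Lemma zc_dvd_mod (x : Zhat) M N : (0 < M)%N -> (0 < N)%N -> (M %| N)%N ->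
  (zc x M.-1 = zc x N.-1 %[mod M])%N.
Proof.
move=> M0 N0 MN.
by rewrite (@zc_compat x M.-1 N.-1) ?prednK // modn_mod.
Qed.

Lemma zmx_mod_dvd n m (A : ZMat n m) M N : (0 < M)%N -> (0 < N)%N -> (M %| N)%N ->
  forall i j, (zmx_mod A N i j = zmx_mod A M i j %[mod M])%N.
Proof. by move=> M0 N0 MN i j; rewrite (zc_dvd_mod _ M0 N0 MN). Qed.

Lemma solvable_mod_primes n m (A : ZMat n m) :
  (forall p, prime p -> solvable_mod (zmx_mod A p) p) ->
  forall N, (0 < N)%N -> solvable_mod (zmx_mod A N) N.
Proof.
move=> Sp; elim/ltn_ind=> N IH N0; have [N_le1|N_gt1] := leqP N 1.
  have -> : N = 1%N by apply/eqP; rewrite eqn_leq N_le1.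
  exact: solvable_mod1.
have p_pr := pdiv_prime N_gt1; have p_dvd := pdiv_dvd N.
set p := pdiv N in p_pr p_dvd *; have p0 := prime_gt0 p_pr.
have N'0 : (0 < N %/ p)%N by rewrite divn_gt0 // pdiv_leq.
rewrite -(divnK p_dvd); apply: solvable_mod_mul => //.
  apply: solvable_mod_congr (IH _ (ltn_Pdiv (prime_gt1 p_pr) N0) N'0) => i j.
  by rewrite zmx_mod_dvd ?muln_gt0 ?N'0 ?dvdn_mulr.
apply: solvable_mod_congr (Sp p p_pr) => i j.
by rewrite zmx_mod_dvd ?muln_gt0 ?N'0 ?dvdn_mull.
Qed.

Lemma indexed_dependent_choice T (Q : nat -> T -> Prop) (E : nat -> T -> T -> Prop) x0 :
  Q 0%N x0 -> (forall j x, Q j x -> exists x', Q j.+1 x' /\ E j x x') ->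
  exists xs : nat -> T, forall j, Q j (xs j) /\ E j (xs j) (xs j.+1).
Proof.
move=> Q0 step.
have /choice[f Hf] : forall jx : nat * T, exists x',
    Q jx.1 jx.2 -> Q jx.1.+1 x' /\ E jx.1 jx.2 x'.
  move=> [j x]; have [/step[x' ?]|nQ] := pselect (Q j x); first by exists x'.
  by exists x => /nQ.
pose xs j := iteri j (fun j x => f (j, x)) x0.
have Qxs j : Q j (xs j) by elim: j => //= j IH; exact: (Hf (j, xs j) IH).1.
by exists xs => j; split => //; exact: (Hf (j, xs j) (Qxs j)).2.
Qed.

Lemma nat_zhat_lt (c : nat) k : (c %% k.+1 < k.+1)%N.
Proof. by rewrite ltn_pmod. Qed.

Lemma nat_zhat_compat (c : nat) k l : (k.+1 %| l.+1)%N ->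
  (c %% k.+1 = (c %% l.+1) %% k.+1)%N.
Proof. by move=> kl; rewrite modn_dvdm. Qed.

Section FactorialCoherent.
Variables (s : nat -> nat) (hs : forall j, (s j.+1 = s j %[mod j`!])%N).

Lemma fact_coherent_mod k j : (k < j)%N -> (s j = s k.+1 %[mod k.+1])%N.
Proof.
elim: j => // j IH; rewrite ltnS leq_eqVlt => /orP[/eqP <- // | lt_kj].
have k_dvd : (k.+1 %| j`!)%N by rewrite dvdn_fact.
by rewrite -IH // -(modn_dvdm (s j.+1) k_dvd) hs modn_dvdm.
Qed.

Lemma fact_coherent_compat k l : (k.+1 %| l.+1)%N ->
  (s k.+1 %% k.+1 = (s l.+1 %% l.+1) %% k.+1)%N.
Proof. by move=> kl; rewrite modn_dvdm // (@fact_coherent_mod k l.+1) // dvdn_leq. Qed.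

Definition zhat_of_fact_coherent : Zhat :=
  MkZhat (fun k => nat_zhat_lt (s k.+1) k) fact_coherent_compat.

End FactorialCoherent.

Definition nat_zhat (c : nat) : Zhat := MkZhat (nat_zhat_lt c) (nat_zhat_compat c).

Lemma zsurjective_solvable_mod n m (A : ZMat n m) :
  zsurjective A -> forall N, solvable_mod (zmx_mod A N.+1) N.+1.
Proof.
move=> SA N y; have [x Hx] := SA (fun i => nat_zhat (y i)).
by exists (fun j => zc (x j) N) => i; have := Hx i N.
Qed.

Lemma zmx_mod_sum_dvd n m (A : ZMat n m) (x : 'I_m -> nat) i M N :
  (0 < M)%N -> (0 < N)%N -> (M %| N)%N ->
  (\sum_j zmx_mod A N i j * x j = \sum_j zmx_mod A M i j * x j %[mod M])%N.
Proof.
by move=> M0 N0 MN; apply: eq_modn_sum => j; rewrite -modnMml zmx_mod_dvd // modnMml.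
Qed.

Lemma solvable_mod_zsurjective n m (A : ZMat n m) :
  (forall N, solvable_mod (zmx_mod A N.+1) N.+1) -> zsurjective A.
Proof.
move=> SA y.
pose sol j (x : 'I_m -> nat) := forall i,
  (\sum_j' zmx_mod A j`! i j' * x j' = zc (y i) (j`!).-1 %[mod j`!])%N.
have [xs Hxs] : exists xs : nat -> 'I_m -> nat,
    forall j, sol j (xs j) /\ forall j', (xs j.+1 j' = xs j j' %[mod j`!])%N.
  apply: (@indexed_dependent_choice _ sol (fun j x x' => forall j', x' j' = x j' %[mod j`!])%N
    (fun=> 0%N)) => [i|j x Hx].
    by rewrite fact0 !modn1.
  have j_dvd : (j`! %| j.+1`!)%N by rewrite factS dvdn_mull.
  have Sj : solvable_mod (zmx_mod A j.+1`!) j.+1.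
    apply: solvable_mod_congr (SA j) => i j'.
    by rewrite zmx_mod_dvd ?fact_gt0 ?dvdn_fact ?leqnn.
  have Hx' i : (\sum_j' zmx_mod A j.+1`! i j' * x j' = zc (y i) (j.+1`!).-1 %[mod j`!])%N.
    by rewrite zmx_mod_sum_dvd ?fact_gt0 // Hx -zc_dvd_mod ?fact_gt0.
  have [x' [Hx'' x'x]] := solvable_mod_lift (fact_gt0 j) (ltn0Sn j) Sj Hx'.
  by exists x'; split => // i; have := Hx'' i; rewrite mulnC -factS; apply.
pose x j' := zhat_of_fact_coherent (fun j => (Hxs j).2 j').
exists x => i k; rewrite /zmatvec_level /=.
have k_dvd : (k.+1 %| k.+1`!)%N by rewrite dvdn_fact ?leqnn.
have -> : (\sum_j zc (A i j) k * (xs k.+1 j %% k.+1) =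
    \sum_j zmx_mod A k.+1`! i j * xs k.+1 j %[mod k.+1])%N.
  rewrite (zmx_mod_sum_dvd _ _ _ (ltn0Sn k)) ?fact_gt0 //.
  by apply: eq_modn_sum => j; rewrite modnMmr.
rewrite -(modn_dvdm _ k_dvd) (Hxs k.+1).1 modn_dvdm // -zc_dvd_mod ?fact_gt0 //.
by rewrite modn_small ?zc_lt.
Qed.

Local Open Scope ring_scope.

Definition Fp_mx p n m (a : 'I_n -> 'I_m -> nat) : 'M['F_p]_(n, m) :=
  \matrix_(i, j) (a i j)%:R.

Lemma row_free_solvable_mod p n m (a : 'I_n -> 'I_m -> nat) :
  prime p -> row_free (Fp_mx p a) -> solvable_mod a p.
Proof.
move=> p_pr /row_freeP[B aB] y.
pose yv : 'cV['F_p]_n := \col_i (y i)%:R.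
exists (fun j => nat_of_ord ((B *m yv) j 0)) => i.
rewrite -(val_Fp_nat p_pr) -(val_Fp_nat p_pr (y i)); congr nat_of_ord.
have := congr1 (fun M => (M *m yv) i 0) aB; rewrite mul1mx -mulmxA !mxE => <-.
by rewrite natr_sum; apply: eq_bigr => j _; rewrite natrM !mxE natr_Zp.
Qed.

Lemma Fp_mx_inj p n m : prime p ->
  injective (fun C : 'M['I_p]_(n, m) => Fp_mx p (fun i j => C i j)).
Proof.
move=> p_pr C C' /matrixP CC'; apply/matrixP => i j; apply: val_inj.
by have := congr1 val (CC' i j); rewrite !mxE /= !(val_Fp_nat p_pr) !modn_small.
Qed.

Lemma card_mulmx_eq0 (F : finFieldType) n m (v : 'rV[F]_n) : v != 0 ->
  (#|[set D : 'M[F]_(n, m) | v *m D == 0%R]| * #|F| ^ m <= #|F| ^ (n * m))%N.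
Proof.
move=> v0; have [i0 vi0] : exists i0, v 0 i0 != 0.
  apply/existsP; apply: contraR v0 => /existsPn v_eq0.
  by apply/eqP/rowP => i; rewrite mxE; apply/eqP/negPn.
pose drop_row (D : 'M[F]_(n, m)) : {ffun 'I_n.-1 * 'I_m -> F} :=
  [ffun x => D (lift i0 x.1) x.2].
have drop_row_inj : {in [set D | v *m D == 0%R] &, injective drop_row}.
  move=> D D'; rewrite !inE => /eqP vD /eqP vD' /ffunP DD'.
  apply/matrixP => i j; apply/eqP; rewrite -subr_eq0; apply/eqP.
  have off i' : i' != i0 -> D i' j - D' i' j = 0.
    case: (unliftP i0 i') => [k ->|->]; last by rewrite eqxx.
    by have := DD' (k, j); rewrite !ffunE => ->; rewrite subrr.
  have : (v *m (D - D')) 0 j = v 0 i0 * (D i0 j - D' i0 j).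
    rewrite mxE (bigD1 i0) //= big1 ?addr0 ?mxE // => i' /off.
    by rewrite !mxE => ->; rewrite mulr0.
  rewrite mulmxBr vD vD' subrr mxE => /esym/eqP; rewrite mulf_eq0 (negbTE vi0) /=.
  by have [/off -> // | /negPn/eqP -> /eqP] := boolP (i != i0).
have n0 : (0 < n)%N by case: n i0 {v v0 vi0 drop_row drop_row_inj} => [[]|].
have -> : (n * m = m + n.-1 * m)%N by rewrite -{1}(prednK n0) mulSn.
rewrite expnD mulnC leq_mul2l; apply/orP; right.
apply: leq_trans (@leq_card_in _ _ drop_row _ drop_row_inj) _.
by rewrite card_ffun card_prod !card_ord.
Qed.

Lemma card_bigcup_le (T I : finType) (P : pred I) (A : I -> {set T}) :
  (#|\bigcup_(i | P i) A i| <= \sum_(i | P i) #|A i|)%N.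
Proof.
elim/big_rec2: _ => [|i B s _ IH]; first by rewrite cards0.
by apply: leq_trans (leq_card_setU _ _) _; rewrite leq_add2l.
Qed.

Lemma nonzero_left_kernel (F : fieldType) n m (D : 'M[F]_(n, m)) :
  ~~ row_free D -> exists2 v : 'rV[F]_n, v != 0 & v *m D = 0.
Proof.
rewrite -kermx_eq0 => /eqP kerD; have [i Di] : exists i, row i (kermx D) != 0.
  apply/existsP; apply: contra_notT kerD => /existsPn kerD0.
  by apply/row_matrixP => i; apply/eqP; rewrite row0; apply/negPn/kerD0.
by exists (row i (kermx D)) => //; apply/sub_kermxP; apply: row_sub.
Qed.

Lemma card_not_row_free (F : finFieldType) n m :
  (#|[set D : 'M[F]_(n, m) | ~~ row_free D]| * #|F| ^ m <= #|F| ^ n * #|F| ^ (n * m))%N.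
Proof.
have sub : [set D : 'M[F]_(n, m) | ~~ row_free D] \subset
    \bigcup_(v : 'rV[F]_n | v != 0) [set D | v *m D == 0].
  apply/fintype.subsetP => D; rewrite inE => /nonzero_left_kernel[v v0 vD].
  by apply/finset.bigcupP; exists v => //; rewrite inE vD.
have := leq_mul (leq_trans (subset_leq_card sub) (card_bigcup_le _ _)) (leqnn (#|F| ^ m)).
move/leq_trans; apply; rewrite big_distrl /=.
apply: (@leq_trans (\sum_(v : 'rV[F]_n | v != 0%R) #|F| ^ (n * m))%N).
  by apply: leq_sum => v; exact: card_mulmx_eq0.
by rewrite sum_nat_const leq_mul2r (leq_trans (max_card _)) ?orbT // card_mx mul1n.
Qed.

Definition singular_Fp p n m (C : 'M['I_p]_(n, m)) : bool :=
  prime p && ~~ row_free (Fp_mx p (fun i j => C i j)).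

Lemma card_singular_Fp p n m :
  (#|@singular_Fp p n m| * p ^ m <= p ^ n * p ^ (n * m))%N.
Proof.
have [p_pr|np] := boolP (prime p); last first.
  rewrite (@eq_card0 _ (@singular_Fp p n m)) // => C.
  by rewrite unfold_in /singular_Fp (negbTE np).
have := card_not_row_free 'F_p n m; rewrite (card_Fp p_pr); apply: leq_trans.
rewrite leq_mul2r -(card_imset _ (@Fp_mx_inj p n m p_pr)); apply/orP; right.
apply/subset_leq_card/fintype.subsetP => _ /imsetP[C CS ->].
by move: CS; rewrite !inE unfold_in /singular_Fp p_pr.
Qed.

Local Open Scope classical_set_scope.

Definition zmx_res n m (A : ZMat n m) k : 'M['I_k.+1]_(n, m) :=
  \matrix_(i, j) Ordinal (zc_lt (A i j) k).

Lemma zmx_resE n m (A : ZMat n m) k : (fun i j => zmx_res A k i j : nat) = zmx_mod A k.+1.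
Proof. by apply/funext => i; apply/funext => j; rewrite mxE. Qed.

Lemma zmx_res_eqP n m (A : ZMat n m) k C :
  zmx_res A k = C <-> forall i j, zc (A i j) k = C i j.
Proof.
split=> [<- i j|AC]; first by rewrite mxE.
by apply/matrixP => i j; apply: val_inj; rewrite mxE /= AC.
Qed.

Definition zres_cyl n m k (C : 'M['I_k.+1]_(n, m)) : set (ZMatSp n m) :=
  [set A | zmx_res A k = C].

Lemma measurable_zres_cyl n m k (C : 'M['I_k.+1]_(n, m)) : measurable (zres_cyl C).
Proof.
apply: sub_sigma_algebra; exists k, (fun i j => nat_of_ord (C i j)).
by apply/seteqP; split => A /zmx_res_eqP.
Qed.

Lemma zmx_res_preimageE n m k (Q : pred 'M['I_k.+1]_(n, m)) :
  [set A : ZMatSp n m | Q (zmx_res A k)] =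
  \big[setU/set0]_(i < #|{: 'M['I_k.+1]_(n, m)}| | Q (enum_val i))
    zres_cyl (enum_val i).
Proof.
apply/seteqP; split => A /=.
  move=> QA; rewrite (bigD1 (enum_rank (zmx_res A k))) /= ?enum_rankK //.
  by left.
by elim/big_rec: _ => [//|i U Qi IH [cylA|/IH//]]; rewrite cylA.
Qed.

Lemma measurable_zmx_res_preimage n m k (Q : pred 'M['I_k.+1]_(n, m)) :
  measurable [set A : ZMatSp n m | Q (zmx_res A k)].
Proof.
rewrite zmx_res_preimageE; apply: bigsetU_measurable => i _.
exact: measurable_zres_cyl.
Qed.

Lemma measurable_zsurjective n m : measurable [set A : ZMatSp n m | zsurjective A].
Proof.
have -> : [set A : ZMatSp n m | zsurjective A] = \bigcap_(N in [set: nat])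
    [set A : ZMatSp n m | `[< solvable_mod (fun i j => zmx_res A N i j : nat) N.+1 >]].
  apply/seteqP; split => A /=.
    by move=> SA N _; apply/asboolP; rewrite zmx_resE; exact: zsurjective_solvable_mod.
  move=> SA; apply: solvable_mod_zsurjective => N.
  by have /asboolP := SA N I; rewrite zmx_resE.
apply: bigcap_measurable => [|N _]; first by exists 0%N.
exact: (measurable_zmx_res_preimage
  (fun C => `[< solvable_mod (fun i j => C i j : nat) N.+1 >])).
Qed.

Lemma pow_inv_le_telescope (R : realType) u k : (2 <= u)%N ->
  ((k.+2)%:R^-1 : R) ^+ u <= 4 / 2 ^+ u * ((k.+1)%:R^-1 - (k.+2)%:R^-1).
Proof.
move=> u2; have k0 : 0 <= k%:R :> R := ler0n _ _.
have -> : ((k.+1)%:R^-1 - (k.+2)%:R^-1 : R) = ((k.+1 * k.+2)%:R)^-1.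
  by rewrite natrM; field; rewrite !gt_eqF //; lra.
rewrite -(subnK u2) addn2; set t := (u - 2)%N.
have -> : 4 / 2 ^+ t.+2 = ((2 ^ t)%:R^-1 : R).
  by rewrite natrX !exprS; field; rewrite expf_neq0.
rewrite -invfM -natrM exprVn -natrX lef_pV2 ?posrE ?ltr0n ?expn_gt0 ?muln_gt0 ?expn_gt0 //.
rewrite ler_nat.
have : (2 ^ t <= k.+2 ^ t)%N by elim: t => // t IH; rewrite !expnS leq_mul.
rewrite !expnS; nia.
Qed.

Lemma sum_pow_inv_le (R : realType) u : (2 <= u)%N ->
  (\sum_(0 <= k <oo) ((((k.+2)%:R : R)^-1) ^+ u)%:E <= (4 / 2 ^+ u)%:E)%E.
Proof.
move=> u2; set c : R := 4 / 2 ^+ u.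
have c0 : 0 <= c by rewrite divr_ge0 // exprn_ge0.
apply: (@le_trans _ _ (\sum_(0 <= k <oo) (c * ((k.+1)%:R^-1 - (k.+2)%:R^-1))%:E)%E).
  apply: lee_nneseries => k _; first by rewrite lee_fin exprn_ge0 // invr_ge0.
  by rewrite lee_fin pow_inv_le_telescope.
apply: lime_le.
  apply: is_cvg_nneseries => k _ _; rewrite lee_fin mulr_ge0 // subr_ge0.
  by rewrite lef_pV2 ?ler_nat ?posrE ?ltr0n.
near=> K; rewrite sumEFin lee_fin -mulr_sumr.
rewrite (telescope_sumr_eq (fun k => - (k.+1)%:R^-1 : R)) ?leq0n //; last first.
  by move=> k _; rewrite opprK addrC.
by rewrite ler_piMr // opprK invr1 gerDr oppr_le0 invr_ge0.
Unshelve. all: end_near.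
Qed.

Section HaarMatrix.
Variables (R : realType) (n m : nat) (P : probability (ZMatSp n m) R).
Hypotheses (hhaar : entries_haar P) (hind : entries_indep P).

Lemma prob_zres_cyl k (C : 'M['I_k.+1]_(n, m)) :
  P (zres_cyl C) = (((k.+1)%:R^-1 : R) ^+ (n * m))%:E.
Proof.
have -> : zres_cyl C = [set A | forall i j, zc (A i j) k = C i j].
  by apply/seteqP; split => A /zmx_res_eqP.
rewrite hind; congr EFin.
under eq_bigr do under eq_bigr do rewrite hhaar //.
by rewrite !prodr_const !card_ord -exprM mulnC.
Qed.

Lemma prob_zmx_res_preimage k (Q : pred 'M['I_k.+1]_(n, m)) :
  P [set A | Q (zmx_res A k)] = (#|Q|%:R * ((k.+1)%:R^-1 : R) ^+ (n * m))%:E.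
Proof.
rewrite zmx_res_preimageE measure_bigsetU_ord_cond; last 2 first.
- by move=> i _; exact: measurable_zres_cyl.
- move=> i j _ _ [A [/= Ai Aj]]; apply: enum_val_inj; by rewrite -Ai -Aj.
rewrite (eq_bigr (fun=> (((k.+1)%:R^-1 : R) ^+ (n * m))%:E)); last first.
  by move=> i _; exact: prob_zres_cyl.
rewrite -(@big_enum_val_cond _ _ _ _ predT Q (fun=> (((k.+1)%:R^-1 : R) ^+ (n * m))%:E)).
by rewrite sumEFin sumr_const mulr_natl.
Qed.

(* A mod p is singular, for p = k + 2. *)
Definition singular_mod k : set (ZMatSp n m) := [set A | singular_Fp (zmx_res A k.+1)].

Lemma measurable_singular_mod k : measurable (singular_mod k).
Proof. exact: measurable_zmx_res_preimage. Qed.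

Lemma prob_singular_mod u k : m = (n + u)%N ->
  (P (singular_mod k) <= (((k.+2)%:R^-1 : R) ^+ u)%:E)%E.
Proof.
move=> mE; rewrite prob_zmx_res_preimage lee_fin.
have := card_singular_Fp k.+2 n m.
rewrite [in (k.+2 ^ m)%N]mE expnD mulnCA leq_pmul2l ?expn_gt0 // => cardS.
rewrite !exprVn ler_pdivrMr ?exprn_gt0 ?ltr0n // mulrC ler_pdivlMr ?exprn_gt0 ?ltr0n //.
by rewrite -!natrX -natrM ler_nat.
Qed.

Lemma not_zsurjective_singular_mod :
  ~` [set A : ZMatSp n m | zsurjective A] `<=` \bigcup_k singular_mod k.
Proof.
move=> A nSA; apply: contra_notP nSA => nsing; apply: solvable_mod_zsurjective => N.
apply: solvable_mod_primes => // p p_pr; apply: row_free_solvable_mod => //.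
have [k pE] : exists k, p = k.+2 by case: p p_pr => [|[|k]] //; exists k.
apply/negPn/negP => nfree; apply: nsing; exists k => //.
by rewrite /singular_mod /= /singular_Fp zmx_resE -pE p_pr.
Qed.

Lemma prob_zsurjective_ge u : m = (n + u)%N -> (2 <= u)%N ->
  ((1 - 4 / 2 ^+ u)%:E <= P [set A | zsurjective A])%E.
Proof.
move=> mE u2; have mS := measurable_singular_mod.
have mU : measurable (\bigcup_k singular_mod k) by exact: bigcup_measurable.
have mnS := measurableC (@measurable_zsurjective n m).
rewrite -[X in P X]setCK probability_setC // EFinB leeB //.
apply: le_trans (le_measure _ _ _ not_zsurjective_singular_mod) _; rewrite ?inE //.
apply: le_trans (generalized_Boole_inequality P mS mU) _.
apply: le_trans (sum_pow_inv_le R u2).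
by apply: lee_nneseries => k _; last exact: prob_singular_mod.
Qed.

End HaarMatrix.

Theorem corollary7 (R : realType) (u : nat -> nat)
  (hu : forall M : nat, exists N : nat, forall n : nat, (N <= n)%N -> (M <= u n)%N)
  (P : forall n : nat, probability (ZMatSp n (n + u n)) R)
  (hhaar : forall n : nat, entries_haar (P n))
  (hind : forall n : nat, entries_indep (P n)) :
  (fun n => P n [set A : ZMatSp n (n + u n) | zsurjective A]) @ \oo --> 1%E.
Proof.
have u_ge M : \forall n \near \oo, (M <= u n)%N.
  by have [N uN] := hu M; exists N => // n; exact: uN.
have pow_cvg : (fun n => 1 - 4 * 2^-1 ^+ u n : R) @ \oo --> (1 : R).
  rewrite -[X in _ --> X]subr0 -(mulr0 4).
  apply: cvgB; first exact: cvg_cst.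
  apply: cvgMr; apply: (cvg_comp _ _ ((cvgnyPge u).2 u_ge)).
  by apply: cvg_expr; rewrite gtr0_norm ?invr_gt0 // invf_lt1 ?ltr1n.
apply: (@squeeze_cvge _ _ _ R (fun n => (1 - 4 * 2^-1 ^+ u n)%:E)
  (fun n => P n [set A | zsurjective A]) (fun=> 1%E)).
- near=> n; rewrite exprVn; apply/andP; split.
    apply: (prob_zsurjective_ge (hhaar n) (hind n) (erefl (n + u n)%N)).
    by near: n; exact: u_ge.
  by apply: probability_le1; exact: measurable_zsurjective.
- by apply: cvg_EFin pow_cvg; near=> n.
- exact: cvg_cst.
Unshelve. all: end_near.
Qed.
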